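(* Let $G$ be a finitely generated group with decidable word problem and $S$ a finite generating set of $G$. Then the infinite snake problem for $(G,S)$ is in $\Pi^0_1$.
   Context: The word problem of $G$ with respect to $S$ asks, given a word $w$ over $S\cup S^{-1}$, whether $w$ represents $1_G$. A tileset graph for $(G,S)$ is a finite multigraph $\Gamma=(A,B)$ whose edges are triples $(a,a',s)$ with $a,a'\in A$, $s\in S\cup S^{-1}$, such that $(a,a',s)\in B$ implies $(a',a,s^{-1})\in B$. A bi-infinite $\Gamma$-snake is a pair $(\omega,\zeta)$ with $\omega:\mathbb{Z}\to G$ injective and $\zeta:\mathbb{Z}\to A$ such that $d\omega_i:=\omega(i)^{-1}\omega(i+1)\in S\cup S^{-1}$ and $(\zeta(i),\zeta(i+1),d\omega_i)\in B$ for all $i$. The infinite snake problem for $(G,S)$: given $\Gamma$, decide whether a bi-infinite $\Gamma$-snake exists. *)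

(* Computability is modelled by an explicit syntax of
   mu-recursive functions with a relational big-step semantics (so that
   "decidable" / "Pi^0_1" are not trivialised by classical choice). *)
From Stdlib Require Import List Arith ZArith Lia.
Import ListNotations.

Inductive mucode : Type :=
| MZero : mucode
| MSucc : mucode
| MProj : nat -> mucode
| MComp : mucode -> list mucode -> mucode
| MPrec : mucode -> mucode -> mucode
| MMu   : mucode -> mucode.

Inductive mueval : mucode -> list nat -> nat -> Prop :=
| ev_zero v : mueval MZero v 0
| ev_succ x v : mueval MSucc (x :: v) (S x)
| ev_proj i v : i < length v -> mueval (MProj i) v (nth i v 0)
| ev_comp f gs v ws y :
    muevals gs v ws -> mueval f ws y -> mueval (MComp f gs) v y
| ev_prec0 f g v y : mueval f v y -> mueval (MPrec f g) (0 :: v) y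
| ev_precS f g n v z y :
    mueval (MPrec f g) (n :: v) z -> mueval g (n :: z :: v) y ->
    mueval (MPrec f g) (S n :: v) y
| ev_mu f v n :
    mueval f (n :: v) 0 ->
    (forall m, m < n -> exists r, mueval f (m :: v) (S r)) ->
    mueval (MMu f) v n
with muevals : list mucode -> list nat -> list nat -> Prop :=
| evs_nil v : muevals [] v []
| evs_cons g gs v w ws :
    mueval g v w -> muevals gs v ws -> muevals (g :: gs) v (w :: ws).

Definition decidable_set (P : nat -> Prop) : Prop :=
  exists c : mucode, forall n,
    (P n -> mueval c [n] 1) /\ (~ P n -> mueval c [n] 0).

Definition Pi01 (P : nat -> Prop) : Prop :=
  exists c : mucode,
    (forall n m, mueval c [n; m] 0 \/ mueval c [n; m] 1) /\
    (forall n, P n <-> forall m, mueval c [n; m] 0).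

Definition npair (x y : nat) : nat := (x + y) * (x + y + 1) / 2 + y.

Fixpoint enc_list (l : list nat) : nat :=
  match l with
  | [] => 0
  | x :: t => S (npair x (enc_list t))
  end.

Record is_group {G : Type} (mul : G -> G -> G) (one : G) (inv : G -> G) : Prop := {
  grp_assoc : forall x y z, mul x (mul y z) = mul (mul x y) z;
  grp_id_l  : forall x, mul one x = x;
  grp_inv_l : forall x, mul (inv x) x = one
}.

Section Words.
Context {G : Type} (mul : G -> G -> G) (one : G) (inv : G -> G).
(* The finite set S = {s 0, ..., s (k-1)}.  Letters of the alphabet
   S u S^{-1} are naturals l < 2k:  l < k stands for s l, and
   k <= l < 2k stands for (s (l-k))^{-1}. *)
Context (k : nat) (s : nat -> G).

Definition letter_val (l : nat) : G :=
  if l <? k then s l else inv (s (l - k)).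

Definition is_word (w : list nat) : Prop := Forall (fun l => l < 2 * k) w.

Definition word_val (w : list nat) : G :=
  fold_right (fun l acc => mul (letter_val l) acc) one w.

Definition generates : Prop :=
  forall g : G, exists w, is_word w /\ word_val w = g.

Definition decidable_word_problem : Prop :=
  exists P : nat -> Prop, decidable_set P /\
    forall w, is_word w -> (P (enc_list w) <-> word_val w = one).

(* A tileset graph: vertex set A = {0, ..., nverts-1}, edge list B of
   triples (a, a', l) with l a letter of S u S^{-1} (edge labelled by the
   group element letter_val l). *)
Record tileset := { nverts : nat; edges : list (nat * nat * nat) }.

Definition valid_tileset (T : tileset) : Prop :=
  (forall a a' l, In (a, a', l) (edges T) ->
     a < nverts T /\ a' < nverts T /\ l < 2 * k) /\
  (forall a a' l, In (a, a', l) (edges T) ->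
     exists l', In (a', a, l') (edges T) /\ letter_val l' = inv (letter_val l)).

Definition is_biinfinite_snake (T : tileset) (omega : Z -> G) (zeta : Z -> nat) : Prop :=
  (forall i j, omega i = omega j -> i = j) /\
  (forall i, zeta i < nverts T) /\
  (forall i, exists l, l < 2 * k /\
      mul (inv (omega i)) (omega (i + 1)%Z) = letter_val l /\
      exists l', In (zeta i, zeta (i + 1)%Z, l') (edges T) /\
                 letter_val l' = mul (inv (omega i)) (omega (i + 1)%Z)).

Definition has_snake (T : tileset) : Prop :=
  exists omega zeta, is_biinfinite_snake T omega zeta.

Definition enc_triple (t : nat * nat * nat) : nat :=
  match t with (a, a', l) => npair a (npair a' l) end.

Definition enc_tileset (T : tileset) : nat :=
  npair (nverts T) (enc_list (map enc_triple (edges T))).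

Definition infinite_snake_problem_Pi01 : Prop :=
  exists P : nat -> Prop, Pi01 P /\
    forall T : tileset, P (enc_tileset T) <-> (valid_tileset T /\ has_snake T).
End Words.

From Stdlib Require Import List Arith ZArith Lia.
From Stdlib Require Import Classical ClassicalEpsilon.
Import ListNotations.

(* A tileset graph admits a bi-infinite snake iff it admits, for every L, a finite snake
   of length L: a path of L edges none of whose nonempty segments is labelled by a word
   equal to 1 in G, i.e. whose labels trace a self-avoiding walk in G.  One direction
   restricts a bi-infinite snake; the other is König's lemma, the graph being finite.
   For fixed T and L the existence of a finite snake is a bounded search whose tests are
   instances of the word problem, so "T is valid and has a finite snake of length L" is
   decided by a mu-recursive program calling the word-problem decider; quantifying over
   L gives a Pi^0_1 set. *)

Fixpoint mueval_functional c v y (H : mueval c v y) {struct H} :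
  forall y', mueval c v y' -> y = y'
with muevals_functional gs v ws (H : muevals gs v ws) {struct H} :
  forall ws', muevals gs v ws' -> ws = ws'.
Proof.
  - destruct H as [v | x v | i v _ | f gs v ws y Hgs Hf | f g v y Hf
                  | f g n v z y Hz Hy | f v n Hn Hlt];
      intros y' H'; inversion H'; subst; try reflexivity.
    + match goal with Hgs' : muevals gs v ?ws' |- _ =>
        pose proof (muevals_functional _ _ _ Hgs _ Hgs') as <- end.
      match goal with Hf' : mueval f ws y' |- _ => exact (mueval_functional _ _ _ Hf _ Hf') end.
    + match goal with Hf' : mueval f v y' |- _ => exact (mueval_functional _ _ _ Hf _ Hf') end.
    + match goal with Hz' : mueval (MPrec f g) (n :: v) ?z' |- _ =>
        pose proof (mueval_functional _ _ _ Hz _ Hz') as <- end.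
      match goal with Hy' : mueval g _ y' |- _ => exact (mueval_functional _ _ _ Hy _ Hy') end.
    + match goal with
      | H1 : mueval f (y' :: v) 0, H2 : forall m, m < y' -> _ |- _ =>
          rename H1 into Hn', H2 into Hlt'
      end.
      destruct (lt_eq_lt_dec n y') as [[Hny | ->] | Hyn]; [| reflexivity |].
      * destruct (Hlt' n Hny) as [r Hr].
        discriminate (mueval_functional _ _ _ Hn _ Hr).
      * destruct (Hlt y' Hyn) as [r Hr].
        discriminate (mueval_functional _ _ _ Hr _ Hn').
  - destruct H as [v | g gs v w ws Hg Hgs]; intros ws' H'; inversion H'; subst.
    + reflexivity.
    + f_equal.
      * match goal with Hg' : mueval g v _ |- _ => exact (mueval_functional _ _ _ Hg _ Hg') end.
      * match goal with Hgs' : muevals gs v _ |- _ =>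
          exact (muevals_functional _ _ _ Hgs _ Hgs') end.
Qed.

Fixpoint primrec (a : nat) (h : nat -> nat -> nat) (n : nat) : nat :=
  match n with 0 => a | S n' => h n' (primrec a h n') end.

Lemma mueval_proj i v y : i < length v -> nth i v 0 = y -> mueval (MProj i) v y.
Proof. intros Hi <-. now constructor. Qed.

Lemma mueval_prec f g v a h n :
  mueval f v a -> (forall i acc, mueval g (i :: acc :: v) (h i acc)) ->
  mueval (MPrec f g) (n :: v) (primrec a h n).
Proof. intros Hf Hg. induction n; econstructor; eauto. Qed.

Lemma mueval_comp1 f a v x y :
  mueval a v x -> mueval f [x] y -> mueval (MComp f [a]) v y.
Proof. intros. repeat econstructor; eauto. Qed.

Lemma mueval_comp2 f a b v x y z :
  mueval a v x -> mueval b v y -> mueval f [x; y] z -> mueval (MComp f [a; b]) v z.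
Proof. intros. repeat econstructor; eauto. Qed.

Fixpoint const_code (c : nat) : mucode :=
  match c with 0 => MZero | S c' => MComp MSucc [const_code c'] end.
Definition add_code := MPrec (MProj 0) (MComp MSucc [MProj 1]).
Definition mul_code := MPrec MZero (MComp add_code [MProj 1; MProj 2]).
Definition pred_code := MPrec MZero (MProj 0).
Definition sub_code := MComp (MPrec (MProj 0) (MComp pred_code [MProj 1])) [MProj 1; MProj 0].

Lemma const_code_spec c v : mueval (const_code c) v c.
Proof. induction c; simpl; [constructor | eapply mueval_comp1; eauto; constructor]. Qed.

Lemma add_code_spec x y : mueval add_code [x; y] (x + y).
Proof.
  replace (x + y) with (primrec y (fun _ acc => S acc) x) by (induction x; simpl; lia).
  apply mueval_prec; [apply mueval_proj; auto |].
  intros i acc. eapply mueval_comp1; [apply mueval_proj; simpl; auto; lia | constructor].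
Qed.

Lemma mul_code_spec x y : mueval mul_code [x; y] (x * y).
Proof.
  replace (x * y) with (primrec 0 (fun _ acc => acc + y) x) by (induction x; simpl; lia).
  apply mueval_prec; [constructor |].
  intros i acc. eapply mueval_comp2; try apply add_code_spec; apply mueval_proj; simpl; auto; lia.
Qed.

Lemma pred_code_spec x : mueval pred_code [x] (pred x).
Proof.
  replace (pred x) with (primrec 0 (fun i _ => i) x) by (destruct x; reflexivity).
  apply mueval_prec; [constructor |]. intros i acc. apply mueval_proj; simpl; auto; lia.
Qed.

Lemma sub_code_spec x y : mueval sub_code [x; y] (x - y).
Proof.
  replace (x - y) with (primrec x (fun _ acc => pred acc) y) by (induction y; simpl; lia).
  eapply mueval_comp2; [apply mueval_proj; simpl; auto; lia .. |].
  apply mueval_prec; [apply mueval_proj; simpl; auto; lia |].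
  intros i acc. eapply mueval_comp1; [apply mueval_proj; simpl; auto; lia | apply pred_code_spec].
Qed.

(* The Pi^0_1 relation is written in this expression language: [den] unfolds
   definitionally to arithmetic on nat, and [compile] turns an expression into a code in
   which [Oracle] runs the word-problem decider. *)
Inductive exp : Type :=
| Var : nat -> exp
| Const : nat -> exp
| Plus : exp -> exp -> exp
| Times : exp -> exp -> exp
| Monus : exp -> exp -> exp
| Oracle : exp -> exp
| Let : exp -> exp -> exp
| Rec : exp -> exp -> exp -> exp
| Sum : exp -> exp -> exp.

Definition bsum (f : nat -> nat) (b : nat) : nat := primrec 0 (fun i acc => acc + f i) b.

Fixpoint den (orc : nat -> nat) (e : exp) (v : list nat) : nat :=
  match e with
  | Var i => nth i v 0
  | Const c => c
  | Plus a b => den orc a v + den orc b v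
  | Times a b => den orc a v * den orc b v
  | Monus a b => den orc a v - den orc b v
  | Oracle a => orc (den orc a v)
  | Let a b => den orc b (den orc a v :: v)
  | Rec x a h => primrec (den orc a v) (fun i acc => den orc h (i :: acc :: v)) (den orc x v)
  | Sum b body => bsum (fun i => den orc body (i :: v)) (den orc b v)
  end.

Definition projs (j n : nat) : list mucode := map MProj (seq j n).

Fixpoint compile (co : mucode) (n : nat) (e : exp) : mucode :=
  match e with
  | Var i => if i <? n then MProj i else MZero  (* [den] reads absent variables as 0 *)
  | Const c => const_code c
  | Plus a b => MComp add_code [compile co n a; compile co n b]
  | Times a b => MComp mul_code [compile co n a; compile co n b]
  | Monus a b => MComp sub_code [compile co n a; compile co n b]
  | Oracle a => MComp co [compile co n a]
  | Let a b => MComp (compile co (S n) b) (compile co n a :: projs 0 n)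
  | Rec x a h =>
      MComp (MPrec (compile co n a) (compile co (S (S n)) h)) (compile co n x :: projs 0 n)
  | Sum b body =>
      let step := MComp add_code [MProj 1; MComp (compile co (S n) body) (MProj 0 :: projs 2 n)] in
      MComp (MPrec MZero step) (compile co n b :: projs 0 n)
  end.

Lemma projs_spec w v : muevals (projs (length w) (length v)) (w ++ v) v.
Proof.
  revert w; induction v as [| x v IH]; intros w; [constructor |].
  constructor.
  - apply mueval_proj; [rewrite length_app; simpl; lia | apply nth_middle].
  - replace (w ++ x :: v) with ((w ++ [x]) ++ v) by (rewrite <- app_assoc; reflexivity).
    replace (S (length w)) with (length (w ++ [x])) by (rewrite length_app; simpl; lia).
    apply IH.
Qed.

Lemma mueval_push c a v x y :
  mueval a v x -> mueval c (x :: v) y -> mueval (MComp c (a :: projs 0 (length v))) v y.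
Proof.
  intros Ha Hc. econstructor; [constructor; [exact Ha | apply (projs_spec [])] | exact Hc].
Qed.

Section Compile.
Variables (co : mucode) (orc : nat -> nat).
Hypothesis co_spec : forall x, mueval co [x] (orc x).

Lemma compile_correct e : forall v, mueval (compile co (length v) e) v (den orc e v).
Proof.
  induction e as [i | c | a IHa b IHb | a IHa b IHb | a IHa b IHb | a IHa
                 | a IHa b IHb | x IHx a IHa h IHh | b IHb body IHbody]; intros v; simpl.
  - destruct (Nat.ltb_spec i (length v)).
    + now apply mueval_proj.
    + rewrite nth_overflow by lia. constructor.
  - apply const_code_spec.
  - eapply mueval_comp2; eauto using add_code_spec.
  - eapply mueval_comp2; eauto using mul_code_spec.
  - eapply mueval_comp2; eauto using sub_code_spec.
  - eapply mueval_comp1; eauto.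
  - eapply mueval_push; [apply IHa | apply (IHb (_ :: v))].
  - eapply mueval_push; [apply IHx |].
    apply mueval_prec; [apply IHa | intros i acc; apply (IHh (i :: acc :: v))].
  - eapply mueval_push; [apply IHb |].
    apply mueval_prec; [constructor |]. intros i acc.
    eapply mueval_comp2; [apply mueval_proj; simpl; auto; lia | | apply add_code_spec].
    econstructor; [| apply (IHbody (i :: v))].
    constructor; [apply mueval_proj; simpl; auto; lia | apply (projs_spec [i; acc])].
Qed.
End Compile.

Definition tri (n : nat) : nat := primrec 0 (fun i acc => acc + (i + 1)) n.
(* [diag y] counts the [i < y] with [tri (i + 1) <= y]: it is the [s] with
   [tri s <= y < tri (s + 1)]. *)
Definition diag (y : nat) : nat := bsum (fun i => 1 - (tri (i + 1) - y)) y.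
Definition unpair2 (y : nat) : nat := y - tri (diag y).
Definition unpair1 (y : nat) : nat := diag y - unpair2 y.

Lemma tri_S n : tri (S n) = tri n + (n + 1).
Proof. reflexivity. Qed.

Lemma tri_le_mono m n : m <= n -> tri m <= tri n.
Proof. induction 1; rewrite ?tri_S; lia. Qed.

Lemma le_tri n : n <= tri n.
Proof. induction n; rewrite ?tri_S; simpl; lia. Qed.

Lemma npair_tri x y : npair x y = tri (x + y) + y.
Proof.
  assert (H2 : forall n, 2 * tri n = n * (n + 1))
    by (induction n; [reflexivity | rewrite tri_S; nia]).
  unfold npair. rewrite <- H2, Nat.mul_comm, Nat.div_mul; lia.
Qed.

Lemma bsum_lt_indicator f n s :
  (forall i, i < n -> f i = if i <? s then 1 else 0) -> bsum f n = min n s.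
Proof.
  induction n as [| n IH]; intros Hf; [reflexivity |].
  change (bsum f (S n)) with (bsum f n + f n).
  rewrite IH by (intros i Hi; apply Hf; lia).
  rewrite Hf by lia. destruct (Nat.ltb_spec n s); lia.
Qed.

Lemma diag_tri s b : b <= s -> diag (tri s + b) = s.
Proof.
  intros Hb. unfold diag. rewrite (bsum_lt_indicator _ _ s); [pose proof (le_tri s); lia |].
  intros i _. destruct (Nat.ltb_spec i s).
  - pose proof (tri_le_mono (i + 1) s). lia.
  - assert (tri (S s) <= tri (i + 1)) by (apply tri_le_mono; lia).
    rewrite tri_S in *. lia.
Qed.

Lemma unpair1_npair x y : unpair1 (npair x y) = x.
Proof. unfold unpair1, unpair2. rewrite npair_tri, diag_tri; lia. Qed.

Lemma unpair2_npair x y : unpair2 (npair x y) = y.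
Proof. unfold unpair2. rewrite npair_tri, diag_tri; lia. Qed.

Definition code_cons (x c : nat) : nat := tri (x + c) + c + 1.
Definition code_tl (c : nat) : nat := unpair2 (c - 1).
Definition code_hd (c : nat) : nat := unpair1 (c - 1).
Definition code_drop (j c : nat) : nat := primrec c (fun _ acc => code_tl acc) j.
Definition code_nth (j c : nat) : nat := code_hd (code_drop j c).
Definition beyond (c j : nat) : nat := 1 - code_drop j c.

Lemma code_cons_enc x l : code_cons x (enc_list l) = enc_list (x :: l).
Proof. unfold code_cons. simpl. rewrite npair_tri. lia. Qed.

Lemma code_tl_enc l : code_tl (enc_list l) = enc_list (tl l).
Proof.
  destruct l; [reflexivity |]. unfold code_tl. simpl. now rewrite Nat.sub_0_r, unpair2_npair.
Qed.

Lemma code_hd_enc l : code_hd (enc_list l) = hd 0 l.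
Proof.
  destruct l; [reflexivity |]. unfold code_hd. simpl. now rewrite Nat.sub_0_r, unpair1_npair.
Qed.

Lemma skipn_S_tl {A} j (l : list A) : skipn (S j) l = tl (skipn j l).
Proof. revert l; induction j; intros [| x l]; simpl; auto. apply IHj. Qed.

Lemma code_drop_enc j l : code_drop j (enc_list l) = enc_list (skipn j l).
Proof.
  induction j; [reflexivity |].
  change (code_drop (S j) (enc_list l)) with (code_tl (code_drop j (enc_list l))).
  now rewrite IHj, code_tl_enc, skipn_S_tl.
Qed.

Lemma code_nth_enc j l : code_nth j (enc_list l) = nth j l 0.
Proof.
  unfold code_nth. rewrite code_drop_enc, code_hd_enc.
  rewrite <- (Nat.add_0_r j) at 2. rewrite <- nth_skipn. now destruct (skipn j l).
Qed.

Lemma beyond_enc l j : beyond (enc_list l) j = if j <? length l then 0 else 1.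
Proof.
  unfold beyond. rewrite code_drop_enc.
  pose proof (length_skipn j l) as Hlen.
  destruct (skipn j l), (Nat.ltb_spec j (length l)); simpl in *; lia.
Qed.

Lemma npair_le_r x y : y <= npair x y.
Proof. rewrite npair_tri. lia. Qed.

Lemma npair_le_mono x y x' y' : x <= x' -> y <= y' -> npair x y <= npair x' y'.
Proof. intros. rewrite !npair_tri. pose proof (tri_le_mono (x + y) (x' + y')). lia. Qed.

Lemma length_le_enc l : length l <= enc_list l.
Proof. induction l; simpl; [lia |]. pose proof (npair_le_r a (enc_list l)). lia. Qed.

Lemma enc_list_le_repeat l b :
  Forall (fun x => x <= b) l -> enc_list l <= enc_list (repeat b (length l)).
Proof. induction 1; simpl; [lia |]. pose proof (npair_le_mono _ _ _ _ H IHForall). lia. Qed.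

Lemma map_seq_shift (g : nat -> nat) a i n :
  map (fun t => g (a + t)) (seq i n) = map g (seq (a + i) n).
Proof.
  revert i; induction n as [| n IH]; intros i; [reflexivity |].
  simpl. rewrite IH. do 3 f_equal. lia.
Qed.

(* A condition is a natural number, 0 meaning true: sums are conjunctions, [bex] is a
   bounded existential and [1 - (1 - _)] normalises to 0/1. *)
Definition chk_lt (a b : nat) : nat := a + 1 - b.
Definition chk_eq (a b : nat) : nat := (a - b) + (b - a).
Definition bex (f : nat -> nat) (b : nat) : nat := 1 - bsum (fun i => 1 - f i) b.

Definition code_src (e : nat) : nat := unpair1 e.
Definition code_tgt (e : nat) : nat := unpair1 (unpair2 e).
Definition code_lab (e : nat) : nat := unpair2 (unpair2 e).

Definition range_check (k V E : nat) : nat :=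
  bsum (fun j => (1 - beyond E j) *
    (chk_lt (code_src (code_nth j E)) V + chk_lt (code_tgt (code_nth j E)) V
     + chk_lt (code_lab (code_nth j E)) (2 * k))) E.

Definition sym_check (orc : nat -> nat) (E : nat) : nat :=
  bsum (fun j => (1 - beyond E j) * bex (fun j' =>
    beyond E j' + chk_eq (code_src (code_nth j' E)) (code_tgt (code_nth j E))
    + chk_eq (code_tgt (code_nth j' E)) (code_src (code_nth j E))
    + (1 - orc (code_cons (code_lab (code_nth j' E)) (code_cons (code_lab (code_nth j E)) 0))))
    E) E.

Definition seg_code (E x j d : nat) : nat :=
  primrec 0 (fun t acc => code_cons (code_lab (code_nth (code_nth (j - (t + 1)) x) E)) acc) d.

Definition path_defect (orc : nat -> nat) (E L x : nat) : nat :=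
  bsum (fun i => beyond E (code_nth i x)) L
  + bsum (fun i => chk_eq (code_tgt (code_nth (code_nth i x) E))
                          (code_src (code_nth (code_nth (i + 1) x) E))) (L - 1)
  + bsum (fun j => bsum (fun d => orc (seg_code E x j (d + 1))) j) (L + 1).

(* The code of [E; ...; E] bounds the code of every list of [L] numbers [<= E]. *)
Definition code_repeat (E L : nat) : nat := primrec 0 (fun _ acc => code_cons E acc) L.

Definition snake_check (orc : nat -> nat) (E L : nat) : nat :=
  bex (path_defect orc E L) (code_repeat E L + 1).

Definition snake_rel (orc : nat -> nat) (k n L : nat) : nat :=
  1 - (1 - (range_check k (unpair1 n) (unpair2 n) + sym_check orc (unpair2 n)
            + snake_check orc (unpair2 n) L)).

Definition Tri (e : exp) : exp := Rec e (Const 0) (Plus (Var 1) (Plus (Var 0) (Const 1))).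
Definition Diag : exp :=
  Sum (Var 0) (Monus (Const 1) (Monus (Tri (Plus (Var 0) (Const 1))) (Var 1))).
Definition Unpair1 (e : exp) : exp :=
  Let e (Let Diag (Monus (Var 0) (Monus (Var 1) (Tri (Var 0))))).
Definition Unpair2 (e : exp) : exp := Let e (Let Diag (Monus (Var 1) (Tri (Var 0)))).
Definition Cons (a b : exp) : exp := Plus (Plus (Tri (Plus a b)) b) (Const 1).
Definition Tl (e : exp) : exp := Unpair2 (Monus e (Const 1)).
Definition Hd (e : exp) : exp := Unpair1 (Monus e (Const 1)).
Definition Drop (j c : exp) : exp := Rec j c (Tl (Var 1)).
Definition Nth (j c : exp) : exp := Hd (Drop j c).
Definition Beyond (c j : exp) : exp := Monus (Const 1) (Drop j c).
Definition Src (e : exp) : exp := Unpair1 e.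
Definition Tgt (e : exp) : exp := Unpair1 (Unpair2 e).
Definition Lab (e : exp) : exp := Unpair2 (Unpair2 e).
Definition ChkLt (a b : exp) : exp := Monus (Plus a (Const 1)) b.
Definition ChkEq (a b : exp) : exp := Plus (Monus a b) (Monus b a).
Definition Ex (b body : exp) : exp := Monus (Const 1) (Sum b (Monus (Const 1) body)).

(* The checks are evaluated in the context [E; V; n; L] (Var 0, Var 1, ...) where
   n = npair V E codes a tileset, [PathDefect] in [x; E; V; n; L] and [SegCode] in
   [d; j; x; E; V; n; L]; binders push their variables in front. *)
Definition RangeCheck (k : nat) : exp :=
  Sum (Var 0) (Times (Monus (Const 1) (Beyond (Var 1) (Var 0)))
    (Plus (Plus (ChkLt (Src (Nth (Var 0) (Var 1))) (Var 2))
                (ChkLt (Tgt (Nth (Var 0) (Var 1))) (Var 2)))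
          (ChkLt (Lab (Nth (Var 0) (Var 1))) (Const (2 * k))))).

Definition SymCheck : exp :=
  Sum (Var 0) (Times (Monus (Const 1) (Beyond (Var 1) (Var 0))) (Ex (Var 1)
    (Plus (Plus (Plus (Beyond (Var 2) (Var 0))
                   (ChkEq (Src (Nth (Var 0) (Var 2))) (Tgt (Nth (Var 1) (Var 2)))))
              (ChkEq (Tgt (Nth (Var 0) (Var 2))) (Src (Nth (Var 1) (Var 2)))))
         (Monus (Const 1) (Oracle (Cons (Lab (Nth (Var 0) (Var 2)))
                                      (Cons (Lab (Nth (Var 1) (Var 2))) (Const 0)))))))).

Definition SegCode : exp :=
  Rec (Plus (Var 0) (Const 1)) (Const 0)
    (Cons (Lab (Nth (Nth (Monus (Var 3) (Plus (Var 0) (Const 1))) (Var 4)) (Var 5))) (Var 1)).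

Definition PathDefect : exp :=
  Plus (Plus (Sum (Var 4) (Beyond (Var 2) (Nth (Var 0) (Var 1))))
           (Sum (Monus (Var 4) (Const 1))
              (ChkEq (Tgt (Nth (Nth (Var 0) (Var 1)) (Var 2)))
                     (Src (Nth (Nth (Plus (Var 0) (Const 1)) (Var 1)) (Var 2))))))
      (Sum (Plus (Var 4) (Const 1)) (Sum (Var 0) (Oracle SegCode))).

Definition SnakeCheck : exp :=
  Ex (Plus (Rec (Var 3) (Const 0) (Cons (Var 2) (Var 1))) (Const 1)) PathDefect.

Definition SnakeRel (k : nat) : exp :=
  Let (Unpair1 (Var 0)) (Let (Unpair2 (Var 1))
    (Monus (Const 1) (Monus (Const 1) (Plus (Plus (RangeCheck k) SymCheck) SnakeCheck)))).

Lemma den_SnakeRel orc k n L : den orc (SnakeRel k) [n; L] = snake_rel orc k n L.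
Proof. reflexivity. Qed.

Lemma bsum_eq_0 f b : bsum f b = 0 <-> forall i, i < b -> f i = 0.
Proof.
  induction b as [| b IH]; [split; [intros _ i Hi; lia | reflexivity] |].
  change (bsum f (S b)) with (bsum f b + f b). rewrite Nat.eq_add_0, IH. split.
  - intros [Hb Hfb] i Hi. destruct (Nat.eq_dec i b) as [-> | Hib]; [exact Hfb | apply Hb; lia].
  - intros H. split; [intros i Hi |]; apply H; lia.
Qed.

Lemma bex_eq_0 f b : bex f b = 0 <-> exists i, i < b /\ f i = 0.
Proof.
  unfold bex. assert (H : bsum (fun i => 1 - f i) b = 0 <-> ~ exists i, i < b /\ f i = 0).
  { rewrite bsum_eq_0. split.
    - intros H [i [Hi Hfi]]. specialize (H i Hi). lia.
    - intros H i Hi. destruct (Nat.eq_dec (f i) 0); [exfalso; eauto | lia]. }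
  split; intros Hb.
  - apply NNPP. intros Hne. apply H in Hne. lia.
  - destruct (Nat.eq_dec (bsum (fun i => 1 - f i) b) 0) as [Hz | Hnz]; [now apply H in Hz | lia].
Qed.

Lemma chk_eq_eq_0 a b : chk_eq a b = 0 <-> a = b.
Proof. unfold chk_eq. lia. Qed.

Lemma code_src_enc t : code_src (enc_triple t) = fst (fst t).
Proof. destruct t as [[a a'] l]. apply unpair1_npair. Qed.

Lemma code_tgt_enc t : code_tgt (enc_triple t) = snd (fst t).
Proof.
  destruct t as [[a a'] l]. unfold code_tgt. simpl. now rewrite unpair2_npair, unpair1_npair.
Qed.

Lemma code_lab_enc t : code_lab (enc_triple t) = snd t.
Proof. destruct t as [[a a'] l]. unfold code_lab. simpl. now rewrite !unpair2_npair. Qed.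

Lemma code_repeat_enc E L : code_repeat E L = enc_list (repeat E L).
Proof.
  induction L as [| L IH]; [reflexivity |].
  change (code_repeat E (S L)) with (code_cons E (code_repeat E L)).
  now rewrite IH, code_cons_enc.
Qed.

Lemma seg_code_enc E x j d : d <= j ->
  seg_code E x j d = enc_list (map (fun t => code_lab (code_nth (code_nth t x) E)) (seq (j - d) d)).
Proof.
  induction d as [| d IH]; intros Hd; [reflexivity |].
  change (seg_code E x j (S d))
    with (code_cons (code_lab (code_nth (code_nth (j - (d + 1)) x) E)) (seg_code E x j d)).
  rewrite IH, code_cons_enc by lia.
  replace (j - d) with (S (j - S d)) by lia. now rewrite Nat.add_1_r.
Qed.


Section Group.
Context {G : Type} (mul : G -> G -> G) (one : G) (inv : G -> G).
Hypothesis HG : is_group mul one inv.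

Lemma mul_inv_r x : mul x (inv x) = one.
Proof.
  destruct HG as [A L I].
  rewrite <- (L (mul x (inv x))), <- (I (inv x)) at 1.
  rewrite <- A, (A (inv x) x (inv x)), I, L. apply I.
Qed.

Lemma mul_one_r x : mul x one = x.
Proof. destruct HG as [A L I]. now rewrite <- (I x), A, mul_inv_r, L. Qed.

Lemma mul_inv_cancel_l x y : mul x (mul (inv x) y) = y.
Proof. destruct HG as [A L I]. now rewrite A, mul_inv_r, L. Qed.

Lemma inv_mul_cancel_l x y : mul (inv x) (mul x y) = y.
Proof. destruct HG as [A L I]. now rewrite A, I, L. Qed.

Lemma eq_inv_of_mul_eq_one x y : mul x y = one -> x = inv y.
Proof.
  intros H. rewrite <- (mul_one_r x), <- (mul_inv_r y), (grp_assoc _ _ _ HG), H.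
  apply (grp_id_l _ _ _ HG).
Qed.

Lemma mul_right_eq_self x w : mul x w = x <-> w = one.
Proof.
  split; intros H.
  - now rewrite <- (inv_mul_cancel_l x w), H, (grp_inv_l _ _ _ HG).
  - now rewrite H, mul_one_r.
Qed.

Variables (k : nat) (s : nat -> G).
Local Notation letter := (letter_val inv k s).
Local Notation word := (word_val mul one inv k s).

Lemma word_val_path (om : nat -> G) (lbl : nat -> nat) :
  (forall i, om (S i) = mul (om i) (letter (lbl i))) ->
  forall p d, om (p + d) = mul (om p) (word (map lbl (seq p d))).
Proof.
  intros Hom p d. revert p. induction d as [| d IH]; intros p.
  - now rewrite Nat.add_0_r, mul_one_r.
  - rewrite <- Nat.add_succ_comm, IH, Hom. simpl. now rewrite (grp_assoc _ _ _ HG).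
Qed.

Section IntegrateZ.
Variable a : Z -> G.

Fixpoint prod_up (n : nat) : G :=
  match n with 0 => one | S n' => mul (prod_up n') (a (Z.of_nat n')) end.
Fixpoint prod_down (n : nat) : G :=
  match n with 0 => one | S n' => mul (prod_down n') (inv (a (- Z.of_nat n))) end.
Definition zprod (z : Z) : G :=
  if (0 <=? z)%Z then prod_up (Z.to_nat z) else prod_down (Z.to_nat (- z)).

Lemma zprod_succ z : zprod (z + 1) = mul (zprod z) (a z).
Proof.
  unfold zprod. destruct (Z.leb_spec 0 z), (Z.leb_spec 0 (z + 1)); try lia.
  - rewrite Z2Nat.inj_add, Nat.add_1_r by lia. simpl. now rewrite Z2Nat.id.
  - replace z with (-1)%Z by lia. simpl.
    now rewrite (grp_id_l _ _ _ HG), (grp_inv_l _ _ _ HG).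
  - replace (Z.to_nat (- z)) with (S (Z.to_nat (- (z + 1)))) by lia.
    cbn [prod_down]. rewrite <- (grp_assoc _ _ _ HG).
    replace (- Z.of_nat (S (Z.to_nat (- (z + 1)))))%Z with z by lia.
    now rewrite (grp_inv_l _ _ _ HG), mul_one_r.
Qed.
End IntegrateZ.
End Group.

Lemma uniform_eventually (P : nat -> nat -> Prop) n :
  (forall a, a < n -> exists M, forall M', M <= M' -> P a M') ->
  exists M, forall a, a < n -> forall M', M <= M' -> P a M'.
Proof.
  induction n as [| n IH]; intros H; [exists 0; lia |].
  destruct IH as [M1 H1]; [intros a Ha; apply H; lia |].
  destruct (H n (Nat.lt_succ_diag_r n)) as [M2 H2].
  exists (M1 + M2). intros a Ha M' HM'.
  destruct (Nat.eq_dec a n) as [-> | Han]; [apply H2 | apply H1]; lia.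
Qed.

Section Compactness.
Variable N : nat.
Variable Q : nat -> (nat -> nat) -> Prop.
Hypothesis Q_lt : forall L f i, Q L f -> i < L -> f i < N.
Hypothesis Q_window : forall L f a L', Q L f -> a + L' <= L -> Q L' (fun i => f (a + i)).
Hypothesis Q_ext : forall L f g, Q L f -> (forall i, i < L -> f i = g i) -> Q L g.
Hypothesis Q_all : forall L, exists f, Q L f.

Definition extends_at (M : nat) (w : list nat) (f : nat -> nat) : Prop :=
  Q (M + length w + M) f /\ forall i, i < length w -> f (M + i) = nth i w 0.

Definition extendable (w : list nat) : Prop := forall M, exists f, extends_at M w f.

Lemma extends_at_le M M' w f :
  M <= M' -> extends_at M' w f -> extends_at M w (fun i => f (M' - M + i)).
Proof.
  intros HM [Hf Hw]. split.
  - apply (Q_window (M' + length w + M')); [exact Hf | lia].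
  - intros i Hi. rewrite <- Hw by exact Hi. f_equal. lia.
Qed.

(* König: if each of the finitely many one-step extensions died out at some padding,
   all would die out at their maximal padding, where [w] itself still extends. *)
Lemma extendable_grow w : extendable w -> exists a b, extendable (a :: w ++ [b]).
Proof.
  intros Hw. apply NNPP. intros Hnone.
  assert (Hdie : forall a b, a < N -> b < N -> exists M, forall M', M <= M' ->
                   ~ exists f, extends_at M' (a :: w ++ [b]) f).
  { intros a b _ _. apply NNPP. intros Hlive. apply Hnone. exists a, b. intros M.
    apply NNPP. intros HM. apply Hlive. exists M. intros M' HM' [f Hf].
    apply HM. eexists. apply (extends_at_le _ _ _ _ HM' Hf). }
  destruct (uniform_eventually (fun a M' => forall b, b < N ->
              ~ exists f, extends_at M' (a :: w ++ [b]) f) N) as [M HM].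
  { intros a Ha.
    destruct (uniform_eventually (fun b M' => ~ exists f, extends_at M' (a :: w ++ [b]) f) N)
      as [M HM]; [intros b Hb; now apply Hdie |].
    exists M. intros M' HM' b Hb. now apply HM. }
  destruct (Hw (S M)) as [f [Hf Hfw]].
  apply (HM (f M) ltac:(apply (Q_lt _ _ _ Hf); lia) M (le_n M)
            (f (S M + length w)) ltac:(apply (Q_lt _ _ _ Hf); lia)).
  exists f. split.
  - simpl. rewrite length_app. simpl.
    replace (M + S (length w + 1) + M) with (S M + length w + S M) by lia. exact Hf.
  - intros [| i] Hi; simpl in *; [f_equal; lia |].
    rewrite length_app in Hi. simpl in Hi.
    destruct (Nat.lt_ge_cases i (length w)).
    + rewrite app_nth1, <- Hfw by lia. f_equal. lia.
    + replace i with (length w) by lia. rewrite nth_middle. f_equal. lia.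
Qed.

Lemma grow_exists w :
  exists w', extendable w -> extendable w' /\ exists a b, w' = a :: w ++ [b].
Proof.
  destruct (classic (extendable w)) as [Hw | Hw]; [| now exists w].
  destruct (extendable_grow w Hw) as [a [b Hab]]. exists (a :: w ++ [b]). eauto.
Qed.

Definition grow (w : list nat) : list nat :=
  proj1_sig (constructive_indefinite_description _ (grow_exists w)).

Lemma grow_spec w : extendable w -> extendable (grow w) /\ exists a b, grow w = a :: w ++ [b].
Proof. exact (proj2_sig (constructive_indefinite_description _ (grow_exists w))). Qed.

Fixpoint window (m : nat) : list nat :=
  match m with 0 => [] | S m' => grow (window m') end.

Lemma window_spec m :
  extendable (window m) /\ length (window m) = 2 * m /\
  exists a b, window (S m) = a :: window m ++ [b].
Proof.
  induction m as [| m (Hm & Hlen & _)].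
  - assert (H0 : extendable []).
    { intros M. destruct (Q_all (M + 0 + M)) as [f Hf]. exists f. split; [exact Hf | simpl; lia]. }
    split; [exact H0 | split; [reflexivity | apply (grow_spec [] H0)]].
  - destruct (grow_spec _ Hm) as [HSm [a [b Hab]]].
    change (grow (window m)) with (window (S m)) in HSm, Hab.
    split; [exact HSm | split; [| exact (proj2 (grow_spec _ HSm))]].
    rewrite Hab. simpl. rewrite length_app, Hlen. simpl. lia.
Qed.

Lemma nth_window m d p : p < 2 * m -> nth p (window m) 0 = nth (p + d) (window (m + d)) 0.
Proof.
  intros Hp. induction d as [| d IH]; [now rewrite !Nat.add_0_r |].
  destruct (window_spec (m + d)) as (_ & Hlen & a & b & Hab).
  rewrite IH, !Nat.add_succ_r, Hab. simpl. rewrite app_nth1; [reflexivity | lia].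
Qed.

(* [window m] sits at positions [-m, m), and the windows are nested. *)
Definition limit (z : Z) : nat :=
  let m := S (Z.to_nat (Z.abs z)) in nth (Z.to_nat (z + Z.of_nat m)) (window m) 0.

Lemma limit_window m p : p < 2 * m -> limit (Z.of_nat p - Z.of_nat m) = nth p (window m) 0.
Proof.
  intros Hp. unfold limit. set (z := (Z.of_nat p - Z.of_nat m)%Z).
  set (m0 := S (Z.to_nat (Z.abs z))). set (q := Z.to_nat (z + Z.of_nat m0)).
  rewrite (nth_window m0 m q), (nth_window m m0 p), (Nat.add_comm m0 m) by (unfold q, m0, z; lia).
  f_equal. unfold q, m0, z. lia.
Qed.

Lemma limit_spec m : Q (2 * m) (fun t => limit (Z.of_nat t - Z.of_nat m)).
Proof.
  destruct (window_spec m) as (Hm & Hlen & _).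
  destruct (Hm 0) as [f [Hf Hfw]]. rewrite Hlen, Nat.add_0_r in Hf. rewrite Hlen in Hfw.
  apply (Q_ext _ f); [exact Hf |]. intros i Hi. rewrite limit_window, <- Hfw; auto.
Qed.
End Compactness.

Section Tileset.
Context {G : Type} (mul : G -> G -> G) (one : G) (inv : G -> G).
Hypothesis HG : is_group mul one inv.
Variables (k : nat) (s : nat -> G) (T : tileset).
Local Notation letter := (letter_val inv k s).
Local Notation word := (word_val mul one inv k s).
Local Notation nedges := (length (edges T)).

Definition edge (j : nat) : nat * nat * nat := nth j (edges T) (0, 0, 0).

Definition edges_in_range : Prop :=
  forall a a' l, In (a, a', l) (edges T) -> a < nverts T /\ a' < nverts T /\ l < 2 * k.

Definition edges_symmetric : Prop :=
  forall a a' l, In (a, a', l) (edges T) ->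
    exists l', In (a', a, l') (edges T) /\ letter l' = inv (letter l).

Definition finite_snake (L : nat) (f : nat -> nat) : Prop :=
  (forall i, i < L -> f i < nedges) /\
  (forall i, i + 1 < L -> snd (fst (edge (f i))) = fst (fst (edge (f (i + 1))))) /\
  (forall i j, i < j <= L -> word (map (fun t => snd (edge (f t))) (seq i (j - i))) <> one).

Lemma edge_In j : j < nedges -> In (edge j) (edges T).
Proof. apply nth_In. Qed.

Lemma edges_in_range_nth :
  edges_in_range <-> forall j, j < nedges ->
    fst (fst (edge j)) < nverts T /\ snd (fst (edge j)) < nverts T /\ snd (edge j) < 2 * k.
Proof.
  split.
  - intros H j Hj. pose proof (edge_In j Hj) as Hin.
    destruct (edge j) as [[a a'] l]. exact (H a a' l Hin).
  - intros H a a' l Hin. destruct (In_nth _ _ (0, 0, 0) Hin) as [j [Hj Hjt]].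
    specialize (H j Hj). unfold edge in H. now rewrite Hjt in H.
Qed.

Lemma finite_snake_window L f a L' :
  finite_snake L f -> a + L' <= L -> finite_snake L' (fun i => f (a + i)).
Proof.
  intros (Hlt & Hcons & Hseg) Ha. split; [| split].
  - intros i Hi. apply Hlt. lia.
  - intros i Hi. rewrite Nat.add_assoc. apply Hcons. lia.
  - intros i j Hij. pose proof (Hseg (a + i) (a + j) ltac:(lia)) as H.
    replace (a + j - (a + i)) with (j - i) in H by lia.
    rewrite <- map_seq_shift in H. exact H.
Qed.

Lemma finite_snake_ext L f g :
  finite_snake L f -> (forall i, i < L -> f i = g i) -> finite_snake L g.
Proof.
  intros (Hlt & Hcons & Hseg) Hfg. split; [| split].
  - intros i Hi. rewrite <- Hfg by exact Hi. auto.
  - intros i Hi. rewrite <- !Hfg by lia. auto.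
  - intros i j Hij. erewrite map_ext_in; [apply (Hseg i j Hij) |].
    intros t Ht. apply in_seq in Ht. rewrite <- Hfg by lia. reflexivity.
Qed.

Section Centered.
Variable e : Z -> nat.
Hypothesis He : forall m, finite_snake (2 * m) (fun t => e (Z.of_nat t - Z.of_nat m)).

Let step (z : Z) : G := letter (snd (edge (e z))).

Lemma centered_edge z :
  e z < nedges /\ snd (fst (edge (e z))) = fst (fst (edge (e (z + 1)))).
Proof.
  set (m := S (S (Z.to_nat (Z.abs z)))). set (p := Z.to_nat (z + Z.of_nat m)).
  destruct (He m) as (Hlt & Hcons & _).
  replace z with (Z.of_nat p - Z.of_nat m)%Z by (unfold p, m; lia). split.
  - apply Hlt. unfold p, m. lia.
  - rewrite Hcons by (unfold p, m; lia). do 4 f_equal. lia.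
Qed.

Lemma zprod_lt_neq i j : (i < j)%Z -> zprod mul one inv step i <> zprod mul one inv step j.
Proof.
  intros Hij Heq.
  set (m := S (Z.to_nat (Z.abs i) + Z.to_nat (Z.abs j))).
  set (om n := zprod mul one inv step (Z.of_nat n - Z.of_nat m)).
  set (p := Z.to_nat (i + Z.of_nat m)). set (q := Z.to_nat (j + Z.of_nat m)).
  assert (Hom : forall n, om (S n) = mul (om n) (step (Z.of_nat n - Z.of_nat m))).
  { intros n. unfold om. rewrite <- (zprod_succ _ _ _ HG). f_equal. lia. }
  pose proof (word_val_path _ _ _ HG k s om _ Hom p (q - p)) as Hpath.
  destruct (He m) as (_ & _ & Hseg). apply (Hseg p q); [unfold p, q, m; lia |].
  apply (mul_right_eq_self _ _ _ HG (om p)).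
  replace (om p) with (zprod mul one inv step i) at 2 by (unfold om, p, m; f_equal; lia).
  rewrite Heq, <- Hpath. unfold om, q, m. f_equal. lia.
Qed.

Lemma snake_of_centered : edges_in_range -> has_snake mul inv k s T.
Proof.
  intros Hrange. rewrite edges_in_range_nth in Hrange.
  exists (zprod mul one inv step), (fun z => fst (fst (edge (e z)))). split; [| split].
  - intros i j Hij. destruct (Z.lt_trichotomy i j) as [Hlt | [Heq | Hgt]]; [| exact Heq |].
    + now destruct (zprod_lt_neq i j Hlt).
    + now destruct (zprod_lt_neq j i Hgt).
  - intros z. apply Hrange, centered_edge.
  - intros z. destruct (centered_edge z) as [Hz Hcons].
    rewrite (zprod_succ _ _ _ HG), (inv_mul_cancel_l _ _ _ HG).
    exists (snd (edge (e z))). split; [apply Hrange, Hz | split; [reflexivity |]].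
    exists (snd (edge (e z))). split; [| reflexivity].
    rewrite <- Hcons. pose proof (edge_In _ Hz). now destruct (edge (e z)) as [[a a'] l].
Qed.
End Centered.

Lemma finite_snake_of_snake : has_snake mul inv k s T -> forall L, exists f, finite_snake L f.
Proof.
  intros (om & ze & Hinj & _ & Hstep) L.
  assert (Hchoice : forall i : nat, exists j, j < nedges /\
            edge j = (ze (Z.of_nat i), ze (Z.of_nat i + 1)%Z, snd (edge j)) /\
            letter (snd (edge j)) = mul (inv (om (Z.of_nat i))) (om (Z.of_nat i + 1)%Z)).
  { intros i. destruct (Hstep (Z.of_nat i)) as (_ & _ & _ & l' & Hin & Hl').
    destruct (In_nth _ _ (0, 0, 0) Hin) as [j [Hj Hjt]].
    exists j. unfold edge. now rewrite Hjt. }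
  set (f i := proj1_sig (constructive_indefinite_description _ (Hchoice i))).
  assert (Hf : forall i, f i < nedges /\
            edge (f i) = (ze (Z.of_nat i), ze (Z.of_nat i + 1)%Z, snd (edge (f i))) /\
            letter (snd (edge (f i))) = mul (inv (om (Z.of_nat i))) (om (Z.of_nat i + 1)%Z))
    by (intros i; apply proj2_sig).
  assert (Hpath : forall p d, om (Z.of_nat (p + d)) =
            mul (om (Z.of_nat p)) (word (map (fun t => snd (edge (f t))) (seq p d)))).
  { apply (word_val_path _ _ _ HG k s (fun n => om (Z.of_nat n))).
    intros i. destruct (Hf i) as (_ & _ & ->). rewrite (mul_inv_cancel_l _ _ _ HG).
    f_equal. lia. }
  exists f. split; [| split].
  - intros i _. apply Hf.
  - intros i _. destruct (Hf i) as (_ & -> & _). destruct (Hf (i + 1)) as (_ & -> & _).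
    simpl. f_equal. lia.
  - intros i j Hij Hone. specialize (Hpath i (j - i)).
    replace (i + (j - i)) with j in Hpath by lia. rewrite Hone, (mul_one_r _ _ _ HG) in Hpath.
    apply Hinj in Hpath. lia.
Qed.

Lemma has_snake_iff :
  edges_in_range -> (has_snake mul inv k s T <-> forall L, exists f, finite_snake L f).
Proof.
  intros Hrange. split; [apply finite_snake_of_snake |]. intros Hall.
  assert (Hlt : forall L f i, finite_snake L f -> i < L -> f i < nedges)
    by (intros L f i Hf; apply Hf).
  exact (snake_of_centered _ (limit_spec _ _ Hlt finite_snake_window finite_snake_ext Hall) Hrange).
Qed.

Definition edge_code : nat := enc_list (map enc_triple (edges T)).

Lemma code_nth_edge_code j : j < nedges -> code_nth j edge_code = enc_triple (edge j).
Proof.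
  intros Hj. unfold edge_code, edge. rewrite code_nth_enc.
  change 0 with (enc_triple (0, 0, 0)). apply map_nth.
Qed.

Lemma beyond_edge_code j : beyond edge_code j = if j <? nedges then 0 else 1.
Proof. unfold edge_code. now rewrite beyond_enc, length_map. Qed.

Lemma nedges_le_edge_code : nedges <= edge_code.
Proof. unfold edge_code. rewrite <- (length_map enc_triple). apply length_le_enc. Qed.

Lemma bsum_guard_eq_0 (X : nat -> nat) :
  bsum (fun j => (1 - beyond edge_code j) * X j) edge_code = 0 <->
  forall j, j < nedges -> X j = 0.
Proof.
  pose proof nedges_le_edge_code as Hle. rewrite bsum_eq_0. split; intros H j Hj.
  - specialize (H j ltac:(lia)). rewrite beyond_edge_code in H.
    destruct (Nat.ltb_spec j nedges); lia.
  - rewrite beyond_edge_code. destruct (Nat.ltb_spec j nedges); [rewrite H |]; lia.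
Qed.

Lemma range_check_spec : range_check k (nverts T) edge_code = 0 <-> edges_in_range.
Proof.
  rewrite edges_in_range_nth. unfold range_check. rewrite bsum_guard_eq_0.
  split; intros H j Hj; specialize (H j Hj);
    rewrite code_nth_edge_code, code_src_enc, code_tgt_enc, code_lab_enc in * by exact Hj;
    unfold chk_lt in *; lia.
Qed.

Lemma edges_symmetric_nth :
  edges_symmetric <-> forall j, j < nedges -> exists j', j' < nedges /\
    edge j' = (snd (fst (edge j)), fst (fst (edge j)), snd (edge j')) /\
    letter (snd (edge j')) = inv (letter (snd (edge j))).
Proof.
  split.
  - intros H j Hj. pose proof (edge_In j Hj) as Hin.
    destruct (edge j) as [[a a'] l]. destruct (H a a' l Hin) as [l' [Hin' Hl']].
    destruct (In_nth _ _ (0, 0, 0) Hin') as [j' [Hj' Hjt']].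
    exists j'. unfold edge. rewrite Hjt'. auto.
  - intros H a a' l Hin. destruct (In_nth _ _ (0, 0, 0) Hin) as [j [Hj Hjt]].
    destruct (H j Hj) as [j' [Hj' [Hedge Hl']]]. fold (edge j) in Hjt.
    rewrite Hjt in Hedge, Hl'. cbn [fst snd] in Hedge, Hl'.
    exists (snd (edge j')). split; [| exact Hl']. rewrite <- Hedge. now apply edge_In.
Qed.

Variable orc : nat -> nat.
Hypothesis orc_bool : forall x, orc x = 0 \/ orc x = 1.
Hypothesis orc_word : forall w, is_word k w -> (orc (enc_list w) = 1 <-> word w = one).

Lemma orc_pair l' l : l' < 2 * k -> l < 2 * k ->
  (orc (code_cons l' (code_cons l 0)) = 1 <-> letter l' = inv (letter l)).
Proof.
  intros Hl' Hl. change 0 with (enc_list []).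
  rewrite !code_cons_enc, orc_word by (repeat constructor; assumption).
  unfold word_val. simpl. rewrite (mul_one_r _ _ _ HG).
  split; [apply (eq_inv_of_mul_eq_one _ _ _ HG) | intros ->; apply (grp_inv_l _ _ _ HG)].
Qed.

Lemma sym_check_spec : edges_in_range -> (sym_check orc edge_code = 0 <-> edges_symmetric).
Proof.
  intros Hrange. rewrite edges_in_range_nth in Hrange.
  rewrite edges_symmetric_nth. unfold sym_check. rewrite bsum_guard_eq_0.
  split; intros H j Hj; specialize (H j Hj); pose proof nedges_le_edge_code as Hle.
  - apply bex_eq_0 in H. destruct H as [j' [_ Hj']].
    rewrite beyond_edge_code in Hj'. destruct (Nat.ltb_spec j' nedges) as [Hj'n |]; [| lia].
    rewrite !code_nth_edge_code, !code_src_enc, !code_tgt_enc, !code_lab_enc in Hj' by assumption.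
    unfold chk_eq in Hj'. exists j'. split; [exact Hj'n | split].
    + destruct (edge j') as [[b b'] c]. simpl in *. do 2 f_equal; lia.
    + apply orc_pair; [apply Hrange; exact Hj'n | apply Hrange; exact Hj |].
      destruct (orc_bool (code_cons (snd (edge j')) (code_cons (snd (edge j)) 0))); lia.
  - apply bex_eq_0. destruct H as [j' [Hj' [Hedge Hl']]]. exists j'. split; [lia |].
    rewrite beyond_edge_code. destruct (Nat.ltb_spec j' nedges); [| lia].
    rewrite !code_nth_edge_code, !code_src_enc, !code_tgt_enc, !code_lab_enc by assumption.
    apply orc_pair in Hl'; [| apply Hrange; assumption ..]. rewrite Hl', Hedge. simpl.
    unfold chk_eq. lia.
Qed.

Lemma orc_segment L x i j : edges_in_range -> (forall t, t < L -> code_nth t x < nedges) ->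
  i < j <= L ->
  (orc (seg_code edge_code x j (j - i)) = 0 <->
   word (map (fun t => snd (edge (code_nth t x))) (seq i (j - i))) <> one).
Proof.
  intros Hrange Hx Hij. rewrite edges_in_range_nth in Hrange.
  rewrite seg_code_enc by lia. replace (j - (j - i)) with i by lia.
  erewrite map_ext_in.
  2: { intros t Ht. apply in_seq in Ht.
       now rewrite code_nth_edge_code, code_lab_enc by (apply Hx; lia). }
  rewrite <- orc_word.
  - destruct (orc_bool (enc_list (map (fun t => snd (edge (code_nth t x))) (seq i (j - i))))); lia.
  - apply Forall_forall. intros l Hl. apply in_map_iff in Hl. destruct Hl as [t [<- Ht]].
    apply in_seq in Ht. apply Hrange, Hx. lia.
Qed.

Lemma path_defect_spec L x : edges_in_range ->
  (path_defect orc edge_code L x = 0 <-> finite_snake L (fun i => code_nth i x)).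
Proof.
  intros Hrange. unfold path_defect, finite_snake. rewrite !Nat.eq_add_0, !bsum_eq_0.
  assert (Hbeyond : forall t, beyond edge_code (code_nth t x) = 0 <-> code_nth t x < nedges)
    by (intros t; rewrite beyond_edge_code; destruct (Nat.ltb_spec (code_nth t x) nedges); lia).
  assert (Hcons : forall i, i + 1 < L -> (forall t, t < L -> code_nth t x < nedges) ->
    chk_eq (code_tgt (code_nth (code_nth i x) edge_code))
           (code_src (code_nth (code_nth (i + 1) x) edge_code)) = 0 <->
    snd (fst (edge (code_nth i x))) = fst (fst (edge (code_nth (i + 1) x)))).
  { intros i Hi Hx. rewrite chk_eq_eq_0, !code_nth_edge_code by (apply Hx; lia).
    now rewrite code_tgt_enc, code_src_enc. }
  split.
  - intros [[HA HB] HC]. assert (Hx : forall t, t < L -> code_nth t x < nedges)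
      by (intros t Ht; apply Hbeyond, HA, Ht).
    split; [exact Hx | split].
    + intros i Hi. apply Hcons, HB; auto; lia.
    + intros i j Hij. apply (orc_segment L); auto.
      replace (j - i) with (j - i - 1 + 1) by lia.
      apply (proj1 (bsum_eq_0 _ _) (HC j ltac:(lia))). lia.
  - intros (Hx & HB & HC). split; [split |].
    + intros t Ht. apply Hbeyond, Hx, Ht.
    + intros i Hi. apply Hcons; auto; [lia | apply HB; lia].
    + intros j Hj. apply bsum_eq_0. intros d Hd. replace (d + 1) with (j - (j - (d + 1))) by lia.
      apply (orc_segment L); auto; [lia |]. apply HC. lia.
Qed.

Lemma snake_check_spec L : edges_in_range ->
  (snake_check orc edge_code L = 0 <-> exists f, finite_snake L f).
Proof.
  intros Hrange. unfold snake_check. rewrite bex_eq_0. split.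
  - intros [x [_ Hx]]. exists (fun i => code_nth i x). now apply path_defect_spec.
  - intros [f Hf]. exists (enc_list (map f (seq 0 L))). split.
    + assert (Hbound : enc_list (map f (seq 0 L)) <= code_repeat edge_code L); [| lia].
      rewrite code_repeat_enc. rewrite <- (length_seq L 0) at 2. rewrite <- (length_map f).
      apply enc_list_le_repeat, Forall_forall. intros y Hy. apply in_map_iff in Hy.
      destruct Hy as [t [<- Ht]]. apply in_seq in Ht. destruct Hf as [Hlt _].
      pose proof (Hlt t ltac:(lia)). pose proof nedges_le_edge_code. lia.
    + apply path_defect_spec; [exact Hrange |]. apply (finite_snake_ext _ f); [exact Hf |].
      intros i Hi. rewrite code_nth_enc, nth_indep with (d' := f 0)
        by (rewrite length_map, length_seq; lia).
      rewrite map_nth, seq_nth by lia. reflexivity.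
Qed.

Lemma snake_rel_spec :
  (forall L, snake_rel orc k (enc_tileset T) L = 0) <->
  valid_tileset inv k s T /\ has_snake mul inv k s T.
Proof.
  assert (Hrel : forall L, snake_rel orc k (enc_tileset T) L = 0 <->
    range_check k (nverts T) edge_code = 0 /\ sym_check orc edge_code = 0 /\
    snake_check orc edge_code L = 0).
  { intros L. unfold snake_rel, enc_tileset. rewrite unpair1_npair, unpair2_npair.
    fold edge_code. lia. }
  split.
  - intros H. destruct (proj1 (Hrel 0) (H 0)) as (Hr & Hs & _). apply range_check_spec in Hr.
    split; [split; [exact Hr | now apply sym_check_spec] |].
    apply has_snake_iff; [exact Hr |]. intros L.
    apply snake_check_spec; [exact Hr |]. apply Hrel, H.
  - intros [[Hr Hs] Hsn] L. apply Hrel. split; [now apply range_check_spec | split].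
    + now apply sym_check_spec.
    + apply snake_check_spec; [exact Hr |]. now apply has_snake_iff.
Qed.
End Tileset.

Lemma decidable_word_problem_oracle {G : Type} (mul : G -> G -> G) (one : G) (inv : G -> G)
  (k : nat) (s : nat -> G) :
  decidable_word_problem mul one inv k s ->
  exists (co : mucode) (orc : nat -> nat),
    (forall x, mueval co [x] (orc x)) /\ (forall x, orc x = 0 \/ orc x = 1) /\
    (forall w, is_word k w -> (orc (enc_list w) = 1 <-> word_val mul one inv k s w = one)).
Proof.
  intros (P & (co & Hco) & HP).
  exists co, (fun x => if excluded_middle_informative (P x) then 1 else 0).
  split; [| split].
  - intros x. destruct (excluded_middle_informative (P x)); now apply Hco.
  - intros x. destruct (excluded_middle_informative (P x)); auto.
  - intros w Hw. rewrite <- HP by exact Hw.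
    destruct (excluded_middle_informative (P (enc_list w))); intuition discriminate.
Qed.

Lemma snake_rel_01 orc k n L : snake_rel orc k n L = 0 \/ snake_rel orc k n L = 1.
Proof. unfold snake_rel. lia. Qed.

Theorem corollary1 (G : Type) (mul : G -> G -> G) (one : G) (inv : G -> G)
  (HG : is_group mul one inv) (k : nat) (s : nat -> G)
  (Hgen : generates mul one inv k s)
  (Hwp : decidable_word_problem mul one inv k s) :
  infinite_snake_problem_Pi01 mul inv k s.
Proof.
  destruct (decidable_word_problem_oracle mul one inv k s Hwp) as (co & orc & Hco & Hbool & Hword).
  set (c := compile co 2 (SnakeRel k)).
  assert (Hc : forall n L, mueval c [n; L] (snake_rel orc k n L))
    by (intros n L; rewrite <- den_SnakeRel; apply (compile_correct _ _ Hco _ [n; L])).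
  exists (fun n => forall L, mueval c [n; L] 0). split.
  - exists c. split; [| reflexivity]. intros n L.
    destruct (snake_rel_01 orc k n L) as [E | E]; rewrite <- E; [left | right]; apply Hc.
  - intros T. rewrite <- (snake_rel_spec mul one inv HG k s T orc Hbool Hword).
    split; intros H L.
    + exact (mueval_functional _ _ _ (Hc _ L) _ (H L)).
    + rewrite <- (H L). apply Hc.
Qed.
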